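(* Let $R$ be a finite chain ring, $r\ge1$, $\rho\ge2$, and let $A=\bigcup_{i=1}^lA_i\subseteq R$ be a well-conditioned set partitioned into $l$ pairwise disjoint blocks with $|A_i|=r+\rho-1$, so $n=|A|=l(r+\rho-1)$. Let $g\in R[x]$ be a polynomial of degree $r+\rho-1$ with unit leading coefficient which is constant on each $A_i$. Let $r\mid K$ with $t=K/r\le l$. For $a=(a_{i,j})_{0\le i\le r-1,\,0\le j\le t-1}\in R^K$ let $f_a(x)=\sum_{i=0}^{r-1}\sum_{j=0}^{t-1}a_{i,j}g(x)^jx^i$ and $\mathcal C=\{(f_a(\alpha))_{\alpha\in A}:a\in R^K\}$. Then $\mathcal C$ is a free $R$-linear code of rank $K$, for each $i$ the punctured code $\mathcal C_{A_i}$ has minimum distance at least $\rho$ (so $\mathcal C$ has $(r,\rho)$-locality with respect to the partition $\{A_i\}$; any erased coordinate in $A_i$ is recoverable from any $r$ other coordinates in $A_i$), and $$d\ge n-K+1-\left(\frac{K}{r}-1\right)(\rho-1).$$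
   Context: A finite chain ring is a finite commutative local ring whose ideals are totally ordered by inclusion; $N(R)$ is its unit group. A subset $T\subseteq N(R)$ is subtractive if $a-b\in N(R)$ for all distinct $a,b\in T$. A set $\{a_1,\dots,a_n\}\subseteq R$ is well-conditioned if either it is a subtractive subset of $N(R)$, or for some $i$ the set without $a_i$ is a subtractive subset of $N(R)$ and $a_i$ is a zero divisor (or $0$). A code has $(r,\rho)$-locality if its coordinates are partitioned into sets $B_i$ with $|B_i|\le r+\rho-1$ and each punctured code $C_{B_i}$ has minimum distance at least $\rho$. *)

From HB Require Import structures.
From mathcomp Require Import all_boot all_order all_algebra.
Set Implicit Arguments. Unset Strict Implicit. Unset Printing Implicit Defensive.
Import Order.TTheory GRing.Theory Num.Theory.
Local Open Scope ring_scope.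

Section ChainRing.
Variable R : finComUnitRingType.

Definition is_ideal (I : {set R}) : bool :=
  [&& (0 \in I), [forall x in I, forall y in I, x + y \in I]
    & [forall x in I, forall y : R, y * x \in I]].

Definition local_ring : Prop := is_ideal [set x : R | x \isn't a GRing.unit].

Definition ideals_chain : Prop :=
  forall I J : {set R}, is_ideal I -> is_ideal J -> I \subset J \/ J \subset I.

Definition finite_chain_ring : Prop := local_ring /\ ideals_chain.

Definition subtractive (T : {set R}) : Prop :=
  (forall a, a \in T -> a \is a GRing.unit) /\
  (forall a b, a \in T -> b \in T -> a != b -> (a - b) \is a GRing.unit).

(* zero divisor (includes 0, as R is nontrivial) *)
Definition zero_divisor (a : R) : Prop := exists b : R, b != 0 /\ a * b = 0.

Definition well_conditioned (A : {set R}) : Prop :=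
  subtractive A \/ exists2 a, a \in A & subtractive (A :\ a) /\ zero_divisor a.

Definition f_eval (r t : nat) (g : {poly R}) (a : 'M[R]_(r, t)) (x : R) : R :=
  \sum_(i < r) \sum_(j < t) a i j * g.[x] ^+ j * x ^+ i.

(* Words of length |A| are represented as functions R -> R vanishing outside A;
   coordinate alpha in A is the value at alpha. *)
Definition code (A : {set R}) (r t : nat) (g : {poly R}) : {set {ffun R -> R}} :=
  [set [ffun x => if x \in A then f_eval g a x else 0] | a : 'M[R]_(r, t)].

Definition hdist (B : {set R}) (w w' : {ffun R -> R}) : nat :=
  #|[set x in B | w x != w' x]|.

Definition punct_min_dist_ge (C : {set {ffun R -> R}}) (B : {set R}) (m : nat) : Prop :=
  forall w w', w \in C -> w' \in C -> (exists2 x, x \in B & w x != w' x) ->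
    (m <= hdist B w w')%N.

Definition min_dist_ge (C : {set {ffun R -> R}}) (A : {set R}) (m : int) : Prop :=
  forall w w', w \in C -> w' \in C -> w != w' -> m <= (hdist A w w')%:Z.

Definition free_of_rank (C : {set {ffun R -> R}}) (K : nat) : Prop :=
  exists b : 'I_K -> {ffun R -> R},
    (forall w, w \in C <-> exists lam : 'I_K -> R,
                 forall x, w x = \sum_(k < K) lam k * b k x) /\
    (forall lam : 'I_K -> R,
        (forall x, \sum_(k < K) lam k * b k x = 0) -> forall k, lam k = 0).

End ChainRing.

From HB Require Import structures.
From mathcomp Require Import all_boot all_order all_algebra.
From mathcomp Require Import zify.
Import GRing.Theory.
Set Implicit Arguments. Unset Strict Implicit. Unset Printing Implicit Defensive.
Local Open Scope ring_scope.

(* In a local ring the non-units form an ideal, so the differences of distinct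
   points of a well-conditioned set are units; hence a nonzero polynomial of
   size s has fewer than s roots in such a set, as over a field.  The codeword
   of a is the evaluation of f_a = sum_j (sum_i a_ij X^i) g^j, of size at most
   K + (t - 1)(rho - 1), which gives the distance bound.  On a block g is a
   constant c, where f_a agrees with a polynomial of size at most r; this gives
   locality.  For freeness: if f_a vanishes on A it is 0, its size being at
   most |A|; and as lead_coef g is a unit, g-adic expansions with digits of size
   at most r < size g are unique, so then a = 0. *)

Definition unit_diffs (R : finUnitRingType) (S : {set R}) : Prop :=
  {in S &, forall x y, x != y -> (x - y) \is a GRing.unit}.

Section LocalRing.
Variable R : finComUnitRingType.

Lemma zero_divisor_nonunit (a : R) : zero_divisor a -> a \isn't a GRing.unit.
Proof.
case=> b [b_neq0 ab0]; apply: contra b_neq0 => a_unit.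
by rewrite -(mulKr a_unit b) ab0 mulr0.
Qed.

Hypothesis R_local : local_ring R.

Lemma local_nonunitD (x y : R) :
  x \isn't a GRing.unit -> y \isn't a GRing.unit -> x + y \isn't a GRing.unit.
Proof.
case/and3P: R_local => _ /forallP addI _ xN yN.
by move/(_ x): addI; rewrite inE xN => /forall_inP/(_ y); rewrite !inE; apply.
Qed.

Lemma well_conditioned_unit_diffs (A : {set R}) : well_conditioned A -> unit_diffs A.
Proof.
case=> [[_ subA] | [a aA [[unitA subA] a_zd]]] x y xA yA; first exact: subA.
have diff_a z : z \in A -> z != a -> (z - a) \is a GRing.unit.
  move=> zA za; apply: contraTT (unitA z _) => [zaN|]; last by rewrite !inE za.
  by rewrite -(subrK a z) local_nonunitD // zero_divisor_nonunit.
have [-> | xa] := eqVneq x a; have [-> | ya] := eqVneq y a => // xy.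
- by rewrite -opprB unitrN diff_a // eq_sym.
- exact: diff_a.
- by apply: subA; rewrite // !inE ?xa ?ya.
Qed.

End LocalRing.

Section RootCount.
Variables (R : finComUnitRingType) (S : {set R}).
Hypothesis S_diffs : unit_diffs S.

Lemma uniq_roots_in (s : seq R) : uniq s -> {subset s <= S} -> uniq_roots s.
Proof.
elim: s => [|x s IHs] //= /andP[xs s_uniq] sS.
rewrite IHs ?andbT => [|//|y ys]; last by apply: sS; rewrite inE ys orbT.
apply/allP => y ys; rewrite /diff_roots mulrC eqxx /=.
by apply: S_diffs; rewrite ?sS ?inE ?eqxx ?ys ?orbT //; apply: contraNneq xs => <-.
Qed.

Lemma card_roots_lt_size (p : {poly R}) :
  p != 0 -> (#|[set x in S | root p x]| < size p)%N.
Proof.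
move=> p_neq0; rewrite cardE; apply: max_ring_poly_roots => //.
  by apply/allP => x; rewrite mem_enum inE => /andP[].
by apply: uniq_roots_in (enum_uniq _) _ => x; rewrite mem_enum inE => /andP[].
Qed.

Lemma poly_eq0_in (p : {poly R}) :
  (size p <= #|S|)%N -> {in S, forall x, root p x} -> p = 0.
Proof.
move=> size_p p_S; apply/eqP; apply: contraTT size_p => /card_roots_lt_size.
by rewrite -ltnNge; congr (_ < _)%N; apply: eq_card => x; rewrite !inE andb_idr // => /p_S.
Qed.

Lemma hdist_gt_poly (w w' : {ffun R -> R}) (p : {poly R}) :
  {in S, forall x, w x - w' x = p.[x]} -> (exists2 x, x \in S & w x != w' x) ->
  (#|S| < hdist S w w' + size p)%N.
Proof.
move=> wp [x0 x0S w_x0].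
have p_neq0 : p != 0 by apply: contra w_x0 => /eqP p0; rewrite -subr_eq0 wp // p0 horner0.
have -> : hdist S w w' = #|S :\: [set x | root p x]|.
  apply: eq_card => x; rewrite !inE; case: (boolP (x \in S)) => xS; rewrite ?andbF //=.
  by rewrite andbT -subr_eq0 wp // rootE.
have := card_roots_lt_size p_neq0; rewrite setIdE -(cardsID [set x | root p x] S).
lia.
Qed.

End RootCount.

Section PowerExpansion.
Variable R : unitRingType.

Lemma size_mul_lead_unit (p q : {poly R}) :
  lead_coef q \is a GRing.unit -> p != 0 -> size (p * q) = (size p + size q).-1.
Proof.
by move=> q_unit p_neq0; rewrite size_proper_mul // mulIr_eq0 ?lead_coef_eq0 //; apply: mulIr.
Qed.

Lemma sum_mul_exp_eq0 (g : {poly R}) (r t : nat) (F : 'I_t -> {poly R}) :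
  (r < size g)%N -> lead_coef g \is a GRing.unit -> (forall j, size (F j) <= r)%N ->
  \sum_(j < t) F j * g ^+ j = 0 -> forall j, F j = 0.
Proof.
move=> size_g g_unit; elim: t F => [|t IHt] F size_F; first by move=> _ [].
rewrite big_ord_recl expr0 mulr1.
set Q := \sum_(j < t) F (lift ord0 j) * g ^+ j.
have -> : \sum_(j < t) F (lift ord0 j) * g ^+ bump 0 j = Q * g.
  by rewrite /Q mulr_suml; apply: eq_bigr => j _; rewrite exprSr mulrA.
move=> F0Q.
have Q0 : Q = 0.
  apply: contraTeq (size_F ord0) => Q_neq0.
  rewrite -ltnNge -[F ord0]opprK (addr0_eq F0Q) size_polyN size_mul_lead_unit //.
  by have := size_poly_gt0 Q; rewrite Q_neq0; lia.
move: F0Q; rewrite Q0 mul0r addr0 => F0 j.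
have [j' ->|->] := unliftP ord0 j; last exact: F0.
by apply: (IHt (fun j => F (lift ord0 j))).
Qed.

End PowerExpansion.

Lemma free_of_rank_card (R : finComUnitRingType) (T : finType)
    (C : {set {ffun R -> R}}) (b : T -> {ffun R -> R}) :
  (forall w, w \in C <-> exists lam : T -> R, forall x, w x = \sum_q lam q * b q x) ->
  (forall lam : T -> R, (forall x, \sum_q lam q * b q x = 0) -> forall q, lam q = 0) ->
  free_of_rank C #|T|.
Proof.
move=> span free.
have sum_enum (F : T -> R) : \sum_q F q = \sum_(k < #|T|) F (enum_val k).
  by rewrite (reindex (@enum_val T predT)) //; apply/onW_bij/enum_val_bij.
exists (b \o enum_val); split=> [w | lam lam0 k].
  rewrite span; split=> -[lam w_lam].
    by exists (lam \o enum_val) => x; rewrite w_lam sum_enum.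
  exists (lam \o enum_rank) => x; rewrite w_lam sum_enum.
  by apply: eq_bigr => k _; rewrite /= enum_valK.
rewrite -[k]enum_valK; apply: (free (lam \o enum_rank)) => x.
by rewrite sum_enum -[RHS](lam0 x); apply: eq_bigr => j _; rewrite /= enum_valK.
Qed.

Section MonomialSums.
Variables (R : nzSemiRingType) (n : nat) (c : 'I_n -> R).

Lemma size_monomial_sum : (size (\sum_(i < n) c i *: 'X^i)%R <= n)%N.
Proof.
apply: leq_trans (size_sum _ _ _) _; apply/bigmax_leqP => i _.
by apply: leq_trans (size_scale_leq _ _) _; rewrite size_polyXn.
Qed.

Lemma coef_monomial_sum (i : 'I_n) : (\sum_(k < n) c k *: 'X^k)`_i = c i.
Proof. by rewrite coef_sumMXn (big_pred1 i) // => k; rewrite /= -val_eqE. Qed.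

End MonomialSums.

Section ChainRingCode.
Variables (R : finComUnitRingType) (A : {set R}) (g : {poly R}) (r rho t : nat).
Hypothesis A_diffs : unit_diffs A.

Definition column_poly (a : 'M[R]_(r, t)) (j : 'I_t) : {poly R} :=
  \sum_(i < r) a i j *: 'X^i.

Definition code_poly (a : 'M[R]_(r, t)) : {poly R} :=
  \sum_(j < t) column_poly a j * g ^+ j.

Definition level_poly (a : 'M[R]_(r, t)) (c : R) : {poly R} :=
  \sum_(i < r) (\sum_(j < t) a i j * c ^+ j) *: 'X^i.

Definition codeword (a : 'M[R]_(r, t)) : {ffun R -> R} :=
  [ffun x => if x \in A then f_eval g a x else 0].

Definition code_basis (q : 'I_r * 'I_t) : {ffun R -> R} :=
  [ffun x => if x \in A then g.[x] ^+ q.2 * x ^+ q.1 else 0].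

Lemma horner_code_poly a x : (code_poly a).[x] = f_eval g a x.
Proof.
rewrite /f_eval horner_sum exchange_big; apply: eq_bigr => j _.
rewrite hornerM horner_exp horner_sum mulr_suml; apply: eq_bigr => i _.
by rewrite hornerZ hornerXn mulrAC.
Qed.

Lemma horner_level_poly a c x : g.[x] = c -> (level_poly a c).[x] = f_eval g a x.
Proof.
move=> gx; rewrite horner_sum; apply: eq_bigr => i _.
by rewrite hornerZ hornerXn mulr_suml gx.
Qed.

Lemma size_code_poly a : (size (code_poly a) <= r + (size g).-1 * t.-1)%N.
Proof.
apply: leq_trans (size_sum _ _ _) _; apply/bigmax_leqP => j _.
apply: leq_trans (size_polyMleq _ _) _.
apply: (@leq_trans (r + ((size g).-1 * j).+1).-1).
  rewrite -[(_ + size _).-1]subn1 -[(r + _).-1]subn1 leq_sub2r //.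
  by rewrite leq_add ?size_monomial_sum ?size_poly_exp_leq.
rewrite addnS leq_add2l leq_mul2l -ltnS prednK ?ltn_ord ?orbT //.
exact: leq_ltn_trans (ltn_ord j).
Qed.

Lemma codeP w : reflect (exists a, w = codeword a) (w \in code A r t g).
Proof. by apply: (iffP imsetP) => -[a]; exists a. Qed.

Lemma codeword_basis a x : codeword a x = \sum_q a q.1 q.2 * code_basis q x.
Proof.
rewrite ffunE; under eq_bigr do rewrite ffunE.
case: ifP => xA; last by rewrite big1 // => q _; rewrite mulr0.
by rewrite /f_eval pair_bigA; apply: eq_bigr => -[i j] _; rewrite mulrA.
Qed.

Lemma code_punct_min_dist (B : {set R}) :
  B \subset A -> {in B &, forall x y, g.[x] = g.[y]} -> (r + rho - 1 <= #|B|)%N ->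
  punct_min_dist_ge (code A r t g) B rho.
Proof.
move=> sBA g_const card_B _ _ /codeP[a ->] /codeP[a' ->] [x0 x0B w_x0].
have B_diffs : unit_diffs B by move=> x y xB yB; apply: A_diffs; apply: (subsetP sBA).
pose p := level_poly a g.[x0] - level_poly a' g.[x0].
have size_p : (size p <= r)%N.
  by apply: leq_trans (size_polyD _ _) _; rewrite size_polyN geq_max !size_monomial_sum.
have w_p : {in B, forall x, codeword a x - codeword a' x = p.[x]}.
  move=> x xB; rewrite !ffunE (subsetP sBA x xB) hornerD hornerN.
  by rewrite !(horner_level_poly _ (g_const x x0 xB x0B)).
have := hdist_gt_poly B_diffs w_p (ex_intro2 _ _ x0 x0B w_x0); lia.
Qed.

Hypothesis size_g : size g = (r + rho)%N.

Lemma code_poly_eq0 a :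
  (0 < rho)%N -> lead_coef g \is a GRing.unit -> code_poly a = 0 -> a = 0.
Proof.
move=> rho_gt0 g_unit a0; apply/matrixP => i j; rewrite mxE.
have r_lt_g : (r < size g)%N by rewrite size_g; lia.
have column0 := sum_mul_exp_eq0 r_lt_g g_unit (fun j => size_monomial_sum (a^~ j)) a0.
by rewrite -(coef_monomial_sum (a^~ j)) column0 coef0.
Qed.

Lemma code_free_of_rank :
  (0 < rho)%N -> lead_coef g \is a GRing.unit -> ((r + rho - 1) * t <= #|A|)%N ->
  free_of_rank (code A r t g) (r * t).
Proof.
move=> rho_gt0 g_unit size_A.
have -> : (r * t)%N = #|{: 'I_r * 'I_t}| by rewrite card_prod !card_ord.
apply: (free_of_rank_card (b := code_basis)) => [w | lam lam0 q].
  split=> [/codeP[a ->] | [lam w_lam]]; first by exists (fun q => a q.1 q.2); apply: codeword_basis.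
  apply/codeP; exists (\matrix_(i, j) lam (i, j)); apply/ffunP => x.
  by rewrite w_lam codeword_basis; apply: eq_bigr => -[i j] _; rewrite mxE.
pose a := \matrix_(i, j) lam (i, j).
have t_gt0 : (0 < t)%N := leq_ltn_trans (leq0n _) (ltn_ord q.2).
suff /matrixP/(_ q.1 q.2) : a = 0 by rewrite !mxE; case: q.
apply: code_poly_eq0 => //; apply: (poly_eq0_in A_diffs) => [|x xA].
  by apply: leq_trans (size_code_poly a) _; rewrite size_g; nia.
have := codeword_basis a x; rewrite ffunE xA rootE horner_code_poly => ->.
by apply/eqP; rewrite -[RHS](lam0 x); apply: eq_bigr => -[i j] _; rewrite mxE.
Qed.

Lemma code_min_dist : (0 < rho)%N ->
  min_dist_ge (code A r t g) A (#|A|%:Z - (r * t)%:Z + 1 - (t%:Z - 1) * (rho%:Z - 1)).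
Proof.
move=> rho_gt0 _ _ /codeP[a ->] /codeP[a' ->] w_neq.
have [x0 x0A w_x0] : exists2 x, x \in A & codeword a x != codeword a' x.
  have /existsP[x w_x] : [exists x, codeword a x != codeword a' x].
    by apply: contraNT w_neq => /existsPn w_eq; apply/eqP/ffunP => x; apply/eqP/negPn.
  by exists x => //; apply: contraTT w_x => xA; rewrite !ffunE (negbTE xA) eqxx.
have t_gt0 : (0 < t)%N.
  rewrite lt0n; apply: contraNneq w_x0 => t0; suff -> : a = a' by [].
  by apply/matrixP => i [j jt]; exfalso; move: jt; rewrite t0.
pose p := code_poly a - code_poly a'.
have size_p : (size p <= r + (size g).-1 * t.-1)%N.
  by apply: leq_trans (size_polyD _ _) _; rewrite size_polyN geq_max !size_code_poly.
have w_p : {in A, forall x, codeword a x - codeword a' x = p.[x]}.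
  by move=> x xA; rewrite !ffunE xA hornerD hornerN !horner_code_poly.
have := hdist_gt_poly A_diffs w_p (ex_intro2 _ _ x0 x0A w_x0).
by move: size_p; rewrite size_g; move: (size p) (hdist _ _ _) => ? ?; nia.
Qed.

End ChainRingCode.

Theorem mainTheorem12 (R : finComUnitRingType) (r rho l K : nat)
  (A : {set R}) (B : 'I_l -> {set R}) (g : {poly R}) :
  finite_chain_ring R ->
  (1 <= r)%N -> (2 <= rho)%N ->
  well_conditioned A ->
  A = \bigcup_(i < l) B i ->
  (forall i j : 'I_l, i != j -> [disjoint B i & B j]) ->
  (forall i : 'I_l, #|B i| = (r + rho - 1)%N) ->
  size g = (r + rho)%N ->
  lead_coef g \is a GRing.unit ->
  (forall i : 'I_l, forall x y, x \in B i -> y \in B i -> g.[x] = g.[y]) ->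
  (r %| K)%N -> (K %/ r <= l)%N ->
  let t := (K %/ r)%N in
  let n := #|A| in
  let C := code A r t g in
  free_of_rank C K /\
  (forall i : 'I_l, punct_min_dist_ge C (B i) rho) /\
  min_dist_ge C A (n%:Z - K%:Z + 1 - (t%:Z - 1) * (rho%:Z - 1)).
Proof.
move=> [R_local _] _ rho_ge2 A_wc A_def B_disj card_B size_g g_unit g_const r_dvdK t_le_l t n C.
have A_diffs := well_conditioned_unit_diffs R_local A_wc.
have K_rt : K = (r * t)%N by rewrite mulnC divnK.
have card_A : #|A| = (l * (r + rho - 1))%N.
  rewrite A_def -sum1_card partition_disjoint_bigcup //.
  by under eq_bigr do rewrite sum1_card card_B; rewrite sum_nat_const card_ord.
have rho_gt0 : (0 < rho)%N := ltnW rho_ge2.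
split; [|split] => [|i|]; rewrite ?K_rt.
- apply: code_free_of_rank A_diffs size_g rho_gt0 g_unit _.
  by rewrite card_A mulnC leq_mul2r t_le_l orbT.
- have B_sub : B i \subset A by rewrite A_def; apply: bigcup_sup.
  exact: (code_punct_min_dist (t := t) A_diffs B_sub (g_const i) (eq_leq (esym (card_B i)))).
- by rewrite /n; apply: (code_min_dist (t := t) A_diffs size_g rho_gt0).
Qed.
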